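(* A finite simple graph $G$ is a linear forest (a disjoint union of paths) if and only if it admits an $LF$-free circular ordering.
   Context: A circular ordering of a finite set is obtained by placing its elements at distinct points of a circle. A circularly ordered graph is a graph with a circular ordering of its vertices; isomorphism means a graph isomorphism preserving circular orderings; induced circularly ordered subgraphs are induced subgraphs with the restricted ordering. A circular ordering $C$ of $V(G)$ is $LF$-free if no induced circularly ordered subgraph of $(G,C)$ is isomorphic to a member of $LF$. $LF$ consists of the following circularly ordered graphs (vertices $v_1,v_2,\dots$ clockwise in this order; the listed edges are all edges): the triangle on $v_1,v_2,v_3$; on $v_1,\dots,v_4$: edges $v_1v_2,v_2v_3,v_3v_4,v_4v_1$ (simple $C_4$); edges $v_1v_2,v_2v_4,v_4v_3,v_3v_1$ (the other circular ordering of $C_4$); edges $v_1v_2,v_2v_3,v_3v_4$ (simple $P_4$); edges $v_3v_1,v_1v_4,v_4v_2$ (crossed $P_4$); edges $v_3v_1,v_3v_2,v_3v_4$ (the claw). *)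

From mathcomp Require Import all_boot.
Set Implicit Arguments. Unset Strict Implicit. Unset Printing Implicit Defensive.

(* A finite simple graph: vertex set a finType T, edge relation e : rel T,
   assumed symmetric and irreflexive (hypotheses of the theorem). *)

Definition path_adj (T : eqType) (p : seq T) (x y : T) : bool :=
  ((x, y) \in zip p (behead p)) || ((y, x) \in zip p (behead p)).

Definition linear_forest (T : finType) (e : rel T) : Prop :=
  exists ps : seq (seq T),
    [/\ uniq (flatten ps),
        (forall x : T, x \in flatten ps) &
        (forall x y : T, e x y = has (fun p => path_adj p x y) ps)].

(* A circular ordering of T: the vertices listed once each, read clockwise
   around the circle (the sequence is considered up to rotation). *)
Definition circular_ordering (T : finType) (s : seq T) : Prop :=
  uniq s /\ forall x : T, x \in s.

Definition clockwise (T : finType) (s : seq T) (k : nat) (f : 'I_k -> T) : bool :=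
  [exists r : 'I_k.+1, sorted ltn (rot r [seq index (f i) s | i <- enum 'I_k])].

(* Circularly ordered patterns: k vertices v_0..v_{k-1} clockwise, and the
   list of edges (0-indexed). *)
Record pattern := Pattern { pat_size : nat; pat_edges : seq (nat * nat) }.

Definition pat_edge (P : pattern) (i j : nat) : bool :=
  ((i, j) \in pat_edges P) || ((j, i) \in pat_edges P).

Definition contains_pattern (T : finType) (e : rel T) (s : seq T) (P : pattern) : Prop :=
  exists f : 'I_(pat_size P) -> T,
    clockwise s f /\
    forall i j : 'I_(pat_size P), e (f i) (f j) = pat_edge P i j.

(* The family LF (vertices v1,...,vk renamed 0,...,k-1). *)
Definition LF : seq pattern :=
  [:: Pattern 3 [:: (0,1); (1,2); (0,2)]
    ; Pattern 4 [:: (0,1); (1,2); (2,3); (3,0)]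
    ; Pattern 4 [:: (0,1); (1,3); (3,2); (2,0)]
    ; Pattern 4 [:: (0,1); (1,2); (2,3)]
    ; Pattern 4 [:: (2,0); (0,3); (3,1)]
    ; Pattern 4 [:: (2,0); (2,1); (2,3)] ]%N.

Definition LF_free (T : finType) (e : rel T) (s : seq T) : Prop :=
  forall i : nat, i < size LF -> ~ contains_pattern e s (nth (Pattern 0 [::]) LF i).

(* For a circular ordering, being LF-free amounts to four conditions: no
   triangle, no 4-cycle, maximum degree 2, and, for every path a-b-c-d, the
   chord bc separates a from d on the circle ([LF_freeP]).  A linear forest
   meets them when each path x_0 ... x_{n-1} is laid out as
   x_0, x_2, x_4, ..., x_5, x_3, x_1, which turns its edges into parallel
   chords.  Conversely, in any nonempty vertex set, an edge whose clockwise
   arc contains the fewest vertices has an endpoint with no other neighbour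
   in the set: otherwise the separation condition produces an edge with a
   shorter arc.  Peeling off such vertices one at a time, each is appended
   to the path containing its unique neighbour, which is an endpoint of that
   path because degrees are at most 2. *)

From mathcomp Require Import all_boot zify.
Set Implicit Arguments. Unset Strict Implicit. Unset Printing Implicit Defensive.

Definition cyclically_sorted (l : seq nat) : bool :=
  has (fun r => sorted ltn (rot r l)) (iota 0 (size l).+1).

Ltac cyclic_lia := rewrite /cyclically_sorted /=; lia.

Lemma cyclic3_cases (a b c : nat) :
  uniq [:: a; b; c] ->
  cyclically_sorted [:: a; b; c] || cyclically_sorted [:: a; c; b].
Proof. by rewrite /= !inE /cyclically_sorted /=; lia. Qed.

Lemma cyclic3_insert (a b c d : nat) :
  cyclically_sorted [:: a; b; c] -> d \notin [:: a; b; c] ->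
  [|| cyclically_sorted [:: a; b; c; d], cyclically_sorted [:: a; b; d; c]
    | cyclically_sorted [:: a; d; b; c]].
Proof.
rewrite !inE /cyclically_sorted /= => abc dabc.
by case: (ltngtP a d) => ?; case: (ltngtP b d) => ?; case: (ltngtP c d) => ?; lia.
Qed.

Lemma cyclic4_cases (a b c d : nat) :
  uniq [:: a; b; c; d] ->
  [|| cyclically_sorted [:: a; b; c; d], cyclically_sorted [:: a; b; d; c],
      cyclically_sorted [:: a; d; b; c], cyclically_sorted [:: a; c; b; d],
      cyclically_sorted [:: a; c; d; b] | cyclically_sorted [:: a; d; c; b]].
Proof.
rewrite [uniq _]/= !inE => abcd.
have dabc : d \notin [:: a; b; c] by rewrite !inE; lia.
have dacb : d \notin [:: a; c; b] by rewrite !inE; lia.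
have : cyclically_sorted [:: a; b; c] || cyclically_sorted [:: a; c; b].
  by apply: cyclic3_cases; rewrite /= !inE; lia.
by case/orP => /cyclic3_insert; [move/(_ d dabc) | move/(_ d dacb)]
  => /or3P[] ->; rewrite ?orbT.
Qed.

Lemma cyclic4_rot (a b c d : nat) :
  cyclically_sorted [:: b; c; d; a] = cyclically_sorted [:: a; b; c; d].
Proof.
by rewrite /cyclically_sorted /=; case: (a < b); case: (b < c); case: (c < d); case: (d < a).
Qed.

Section Patterns.
Variables (T : finType) (e : rel T) (s : seq T).
Local Notation idx x := (index x s).

Definition induces (vs : seq T) (P : pattern) : Prop :=
  forall x0 i j, i < pat_size P -> j < pat_size P ->
    e (nth x0 vs i) (nth x0 vs j) = pat_edge P i j.

Lemma contains_patternP (P : pattern) :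
  contains_pattern e s P <->
  exists2 vs : seq T, size vs = pat_size P &
    cyclically_sorted [seq idx v | v <- vs] /\ induces vs P.
Proof.
have cwE k (f : 'I_k -> T) : clockwise s f = cyclically_sorted [seq idx (f i) | i <- enum 'I_k].
  rewrite /cyclically_sorted size_map size_enum_ord; apply/existsP/hasP => [[r Hr]|[r]].
    by exists (val r); rewrite ?mem_iota /=.
  by rewrite mem_iota => /= Hr ?; exists (Ordinal Hr).
split=> [[f [cw Hf]] | [vs Hsize [cw Hvs]]].
  pose vs := [seq f i | i <- enum 'I_(pat_size P)].
  have nth_vs x0 i (Hi : i < pat_size P) : nth x0 vs i = f (Ordinal Hi).
    rewrite (nth_map (Ordinal Hi)) ?size_enum_ord //; congr f.
    by apply: val_inj; rewrite /= nth_enum_ord.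
  exists vs; first by rewrite size_map size_enum_ord.
  split=> [|x0 i j Hi Hj]; first by rewrite -map_comp -cwE.
  by rewrite (nth_vs x0 i Hi) (nth_vs x0 j Hj) Hf.
have /eqP Hsize' := Hsize; pose t := Tuple Hsize'.
exists (tnth t); split.
  by rewrite cwE (map_comp (index^~ s) (tnth t)) map_tnth_enum.
by move=> i j; rewrite (tnth_nth (tnth t i) t i) (tnth_nth (tnth t i) t j); apply: Hvs.
Qed.
End Patterns.

Definition triangle_free (T : Type) (e : rel T) : Prop :=
  forall a b c, e a b -> e b c -> e c a -> False.

Definition square_free (T : eqType) (e : rel T) : Prop :=
  forall a b c d, a != c -> b != d -> e a b -> e b c -> e c d -> e d a -> False.

Definition max_degree2 (T : eqType) (e : rel T) : Prop :=
  forall x y1 y2 y3, y1 != y2 -> y1 != y3 -> y2 != y3 ->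
    e x y1 -> e x y2 -> e x y3 -> False.

(* The middle edge [bc] of every path [a-b-c-d], seen as a chord of the
   circle, separates [a] from [d]. *)
Definition P4_separated (T : eqType) (e : rel T) (s : seq T) : Prop :=
  forall a b c d, a != c -> b != d -> e a b -> e b c -> e c d ->
    cyclically_sorted [:: index b s; index a s; index c s]
      != cyclically_sorted [:: index b s; index d s; index c s].

Section LFFree.
Variables (T : finType) (e : rel T) (s : seq T).
Hypotheses (e_sym : symmetric e) (e_irr : irreflexive e).
Hypothesis s_circ : circular_ordering s.
Local Notation idx x := (index x s).

Lemma edge_neq x y : e x y -> x != y.
Proof. by apply: contraTneq => ->; rewrite e_irr. Qed.

Lemma index_neq x y : x != y -> idx x != idx y.
Proof. by case: s_circ => _ sT; apply: contra => /eqP/index_inj ->. Qed.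

Ltac solve_induces :=
  move=> ? [|[|[|[|?]]]] [|[|[|[|?]]]] //= _ _;
  (* [simpl] does not decide [pat_edge] on numerals; [compute] does. *)
  match goal with |- _ = ?b => let b' := eval compute in b in change b with b' end;
  match goal with
  | |- e ?x ?x = _ => exact: e_irr
  | |- _ = true => first [assumption | by rewrite e_sym]
  | |- _ = false => apply/negbTE; first [assumption | by rewrite e_sym]
  end.

Section FromLFFree.
Hypothesis s_free : LF_free e s.

Lemma forbidden i vs :
  i < size LF -> size vs = pat_size (nth (Pattern 0 [::]) LF i) ->
  cyclically_sorted [seq idx v | v <- vs] ->
  induces e vs (nth (Pattern 0 [::]) LF i) -> False.
Proof. by move=> Hi Hsize cw Hvs; apply: (s_free Hi); apply/contains_patternP; exists vs. Qed.

Ltac rotate ord :=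
  first [ exact: ord | rewrite cyclic4_rot; exact: ord
        | rewrite 2!cyclic4_rot; exact: ord | rewrite 3!cyclic4_rot; exact: ord ].

Ltac forbid i vs ord :=
  exfalso; apply: (@forbidden i vs) => //; first [solve_induces | rotate ord].

Lemma LF_free_triangle_free : triangle_free e.
Proof.
move=> a b c eab ebc eca.
have ac : a != c by rewrite eq_sym edge_neq.
have : uniq [:: idx a; idx b; idx c].
  by rewrite /= !inE !negb_or !index_neq //; apply: edge_neq.
case/cyclic3_cases/orP => ord; [forbid 0 [:: a; b; c] ord | forbid 0 [:: a; c; b] ord].
Qed.

Let cyclic4_cases_index a b c d : a != b -> a != c -> a != d -> b != c -> b != d -> c != d ->
  [|| cyclically_sorted [:: idx a; idx b; idx c; idx d],
      cyclically_sorted [:: idx a; idx b; idx d; idx c],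
      cyclically_sorted [:: idx a; idx d; idx b; idx c],
      cyclically_sorted [:: idx a; idx c; idx b; idx d],
      cyclically_sorted [:: idx a; idx c; idx d; idx b]
    | cyclically_sorted [:: idx a; idx d; idx c; idx b]].
Proof. by move=> *; apply: cyclic4_cases; rewrite /= !inE !negb_or !index_neq. Qed.

Lemma LF_free_square_free : square_free e.
Proof.
move=> a b c d ac bd eab ebc ecd eda.
have nac : ~~ e a c.
  by apply/negP => eac; apply: (LF_free_triangle_free eab ebc); rewrite e_sym.
have nbd : ~~ e b d.
  by apply/negP => ebd; apply: (LF_free_triangle_free ebc ecd); rewrite e_sym.
have ad : a != d by rewrite eq_sym edge_neq.
case/or4P: (cyclic4_cases_index (edge_neq eab) ac ad (edge_neq ebc) bd (edge_neq ecd))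
  => [o|o|o|/or3P[o|o|o]].
- by forbid 1 [:: a; b; c; d] o.
- by forbid 2 [:: a; b; d; c] o.
- by forbid 2 [:: a; d; b; c] o.
- by forbid 2 [:: c; b; d; a] o.
- by forbid 2 [:: b; a; c; d] o.
- by forbid 1 [:: a; d; c; b] o.
Qed.

Lemma LF_free_max_degree2 : max_degree2 e.
Proof.
move=> x y1 y2 y3 y12 y13 y23 e1 e2 e3.
have nonadj y y' : e x y -> e x y' -> ~~ e y y'.
  by move=> ey ey'; apply/negP => eyy'; apply: (LF_free_triangle_free ey eyy'); rewrite e_sym.
have n12 := nonadj _ _ e1 e2; have n13 := nonadj _ _ e1 e3; have n23 := nonadj _ _ e2 e3.
case/or4P: (cyclic4_cases_index (edge_neq e1) (edge_neq e2) (edge_neq e3) y12 y13 y23)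
  => [o|o|o|/or3P[o|o|o]].
- by forbid 5 [:: y2; y3; x; y1] o.
- by forbid 5 [:: y3; y2; x; y1] o.
- by forbid 5 [:: y1; y2; x; y3] o.
- by forbid 5 [:: y1; y3; x; y2] o.
- by forbid 5 [:: y3; y1; x; y2] o.
- by forbid 5 [:: y2; y1; x; y3] o.
Qed.

Lemma LF_free_P4_separated : P4_separated e s.
Proof.
move=> a b c d ac bd eab ebc ecd.
have ad : a != d.
  by apply: contraTneq ecd => <-; apply/negP => eca; apply: (LF_free_triangle_free eab ebc).
have nac : ~~ e a c.
  by apply/negP => eac; apply: (LF_free_triangle_free eab ebc); rewrite e_sym.
have nbd : ~~ e b d.
  by apply/negP => ebd; apply: (LF_free_triangle_free ebc ecd); rewrite e_sym.
have nad : ~~ e a d.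
  by apply/negP => ead; apply: (LF_free_square_free ac bd eab ebc ecd); rewrite e_sym.
case/or4P: (cyclic4_cases_index (edge_neq eab) ac ad (edge_neq ebc) bd (edge_neq ecd))
  => [o|o|o|/or3P[o|o|o]].
- by forbid 3 [:: a; b; c; d] o.
- by move: o; cyclic_lia.
- by forbid 4 [:: c; a; d; b] o.
- by forbid 4 [:: b; d; a; c] o.
- by move: o; cyclic_lia.
- by forbid 3 [:: d; c; b; a] o.
Qed.

End FromLFFree.

Section ToLFFree.
Hypotheses (e_tri : triangle_free e) (e_sq : square_free e).
Hypotheses (e_deg : max_degree2 e) (s_sep : P4_separated e s).

Lemma induced_edge vs P x0 i j : induces e vs P ->
  i < pat_size P -> j < pat_size P -> pat_edge P i j -> e (nth x0 vs i) (nth x0 vs j).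
Proof. by move=> Hvs Hi Hj; rewrite Hvs. Qed.

Lemma neq_of_index_neq x y : idx x != idx y -> x != y.
Proof. by apply: contraNneq => ->. Qed.

Lemma LF_free_intro : LF_free e s.
Proof.
move=> [|[|[|[|[|[|i]]]]]] // _ /contains_patternP
  [[|a [|b [|c [|d [|? ?]]]]] // _ [cw Hvs]];
  have E := induced_edge a Hvs.
- by apply: (e_tri (E 0 1 isT isT isT) (E 1 2 isT isT isT)); rewrite e_sym (E 0 2 isT isT isT).
- by apply: (e_sq _ _ (E 0 1 isT isT isT) (E 1 2 isT isT isT) (E 2 3 isT isT isT)
    (E 3 0 isT isT isT)); apply: neq_of_index_neq; move: cw; cyclic_lia.
- by apply: (e_sq _ _ (E 0 1 isT isT isT) (E 1 3 isT isT isT) (E 3 2 isT isT isT)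
    (E 2 0 isT isT isT)); apply: neq_of_index_neq; move: cw; cyclic_lia.
- have ac : a != c by apply: neq_of_index_neq; move: cw; cyclic_lia.
  have bd : b != d by apply: neq_of_index_neq; move: cw; cyclic_lia.
  by move: (s_sep ac bd (E 0 1 isT isT isT) (E 1 2 isT isT isT) (E 2 3 isT isT isT)) cw; cyclic_lia.
- have cd : c != d by apply: neq_of_index_neq; move: cw; cyclic_lia.
  have ab : a != b by apply: neq_of_index_neq; move: cw; cyclic_lia.
  by move: (s_sep cd ab (E 2 0 isT isT isT) (E 0 3 isT isT isT) (E 3 1 isT isT isT)) cw; cyclic_lia.
- by apply: (e_deg _ _ _ (E 2 0 isT isT isT) (E 2 1 isT isT isT) (E 2 3 isT isT isT));
    apply: neq_of_index_neq; move: cw; cyclic_lia.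
Qed.

End ToLFFree.

Lemma LF_freeP :
  LF_free e s <-> [/\ triangle_free e, square_free e, max_degree2 e & P4_separated e s].
Proof.
split=> [free | [tri sq deg sep]]; last exact: LF_free_intro.
split; [ exact: LF_free_triangle_free | exact: LF_free_square_free
       | exact: LF_free_max_degree2 | exact: LF_free_P4_separated ].
Qed.
End LFFree.

Section Leaves.
Variables (T : finType) (e : rel T) (s : seq T).
Hypotheses (e_sym : symmetric e) (s_sep : P4_separated e s).
Local Notation idx x := (index x s).

Definition arc (x y : T) : {set T} :=
  [set z | cyclically_sorted [:: idx x; idx z; idx y]].

Lemma card_arc_ltl x w y :
  cyclically_sorted [:: idx x; idx w; idx y] -> #|arc x w| < #|arc x y|.
Proof.
move=> xwy; apply/proper_card/properP; split; last by exists w; rewrite !inE //; cyclic_lia.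
by apply/subsetP => z; rewrite !inE; move: xwy; cyclic_lia.
Qed.

Lemma card_arc_ltr x w y :
  cyclically_sorted [:: idx x; idx w; idx y] -> #|arc w y| < #|arc x y|.
Proof.
move=> xwy; apply/proper_card/properP; split; last by exists w; rewrite !inE //; cyclic_lia.
by apply/subsetP => z; rewrite !inE; move: xwy; cyclic_lia.
Qed.

Lemma shorter_edge a b c d : a != c -> b != d -> e a b -> e b c -> e c d ->
  (#|arc b a| < #|arc b c|) || (#|arc d c| < #|arc b c|).
Proof.
move=> ac bd eab ebc ecd; have := s_sep ac bd eab ebc ecd.
case: (boolP (cyclically_sorted [:: idx b; idx a; idx c])) => [/card_arc_ltl -> // | _].
by case: (boolP (cyclically_sorted _)) => // /card_arc_ltr ->; rewrite orbT.
Qed.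

Lemma exists_leaf (A : {set T}) : A != set0 ->
  exists2 v, v \in A & {in A &, forall x y, e v x -> e v y -> x = y}.
Proof.
move=> /set0Pn[v0 v0A].
have leaf v w : ~~ [exists x in A, e v x && (x != w)] ->
    {in A &, forall x y, e v x -> e v y -> x = y}.
  move=> /existsPn nb x y xA yA evx evy.
  by move: (nb x) (nb y); rewrite xA yA evx evy /= !negbK => /eqP-> /eqP->.
pose P (p : T * T) := [&& p.1 \in A, p.2 \in A & e p.1 p.2].
have [p0 Pp0 | noedge] := pickP P; last first.
  by exists v0 => // x y xA _ ev0x; move: (noedge (v0, x)); rewrite /P /= v0A xA ev0x.
case: (arg_minnP (fun p : T * T => #|arc p.1 p.2|) Pp0) => -[b c] /and3P[/= bA cA ebc] min_bc.
have [/existsP[a /and3P[aA eba ac]] | ] := boolP [exists x in A, e b x && (x != c)]; last first.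
  by move/leaf; exists b.
have [/existsP[d /and3P[dA ecd db]] | ] := boolP [exists x in A, e c x && (x != b)]; last first.
  by move/leaf; exists c.
have eab : e a b by rewrite e_sym.
have bd : b != d by rewrite eq_sym.
exfalso; case/orP: (shorter_edge ac bd eab ebc ecd); rewrite ltnNge => /negP; apply.
  by apply: (min_bc (b, a)); rewrite /P /= bA aA.
by apply: (min_bc (d, c)); rewrite /P /= dA cA e_sym.
Qed.

End Leaves.

Section PathAdjacency.
Variable T : eqType.
Implicit Types (p q : seq T) (u v x y : T).

Lemma path_adj_sym p x y : path_adj p x y = path_adj p y x.
Proof. by rewrite /path_adj orbC. Qed.

Lemma zip_beheadP p x0 x y :
  reflect (exists2 i, i.+1 < size p & (x, y) = (nth x0 p i, nth x0 p i.+1))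
          ((x, y) \in zip p (behead p)).
Proof.
have size_zb : size (zip p (behead p)) = (size p).-1 by rewrite size_zip size_behead; lia.
have nth_zb i : i.+1 < size p ->
    nth (x0, x0) (zip p (behead p)) i = (nth x0 p i, nth x0 p i.+1).
  by move=> Hi; rewrite nth_zip_cond size_zb ifT ?nth_behead //; lia.
apply: (iffP (nthP (x0, x0))) => [[i Hi <-] | [i Hi ->]]; exists i;
  rewrite ?size_zb ?nth_zb //; move: Hi; rewrite ?size_zb; lia.
Qed.

Lemma path_adj_mem p x y : path_adj p x y -> x \in p.
Proof.
by case/orP => /(zip_beheadP _ x) [i Hi [] ] => [-> _ | _ ->]; apply: mem_nth; lia.
Qed.

Lemma path_adjE p x y : uniq p ->
  path_adj p x y =
  [&& x \in p, y \in p & (index y p == (index x p).+1) || (index x p == (index y p).+1)].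
Proof.
move=> up; have step a b : ((a, b) \in zip p (behead p)) =
    [&& a \in p, b \in p & index b p == (index a p).+1].
  apply/(zip_beheadP _ a)/idP => [[i Hi [-> ->]] | /and3P[ap bp /eqP ib]].
    by rewrite !mem_nth ?index_uniq //=; lia.
  by exists (index a p); rewrite -?ib ?index_mem ?nth_index.
rewrite /path_adj !step; case: (x \in p); case: (y \in p) => //.
Qed.

Lemma index_rev p x : uniq p -> x \in p -> index x (rev p) = size p - (index x p).+1.
Proof.
move=> up xp; have ix := index_mem x p; rewrite xp in ix.
have nth_x : nth x (rev p) (size p - (index x p).+1) = x.
  rewrite nth_rev; last lia.
  have -> : size p - (size p - (index x p).+1).+1 = index x p by lia.
  exact: nth_index.
by rewrite -{1}nth_x index_uniq ?rev_uniq ?size_rev //; lia.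
Qed.

Lemma path_adj_rev p x y : uniq p -> path_adj (rev p) x y = path_adj p x y.
Proof.
move=> up; rewrite !path_adjE ?rev_uniq // !mem_rev.
case xp: (x \in p); case yp: (y \in p) => //=; rewrite !index_rev //.
by move: (index_mem x p) (index_mem y p); rewrite xp yp; lia.
Qed.

Lemma path_adj_cons v q x y :
  path_adj (v :: q) x y =
  [|| path_adj q x y, (x == v) && (ohead q == Some y) | (y == v) && (ohead q == Some x)].
Proof.
case: q => [|u r]; first by rewrite /path_adj /= !andbF.
rewrite /path_adj /= !in_cons !xpair_eqE ![Some _ == Some _]/eq_op /= ![_ == u]eq_sym.
by case: (x == v); case: (u == y); case: (y == v); case: (u == x);
  case: ((x, y) \in _); case: ((y, x) \in _).
Qed.

Lemma head_nth0 p u : 0 < size p -> nth u p 0 = u -> p = u :: behead p.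
Proof. by case: p => //= w r _ ->. Qed.

Lemma path_end_or_inner p u : uniq p -> u \in p ->
  (exists r, p = u :: r \/ rev p = u :: r) \/
  exists y1 y2, [/\ y1 != y2, path_adj p u y1 & path_adj p u y2].
Proof.
move=> up up'; have ip := index_mem u p; rewrite up' in ip.
have nth_u := nth_index u up'; set i := index u p in ip nth_u.
case: (posnP i) => [i0 | ipos].
  by left; exists (behead p); left; apply: head_nth0; rewrite -?i0 //; lia.
have [inner | iend] : i.+1 < size p \/ i.+1 = size p by lia.
  right; exists (nth u p i.-1), (nth u p i.+1); split.
  - by rewrite nth_uniq //; lia.
  - by rewrite path_adjE // up' mem_nth ?index_uniq /= -/i; lia.
  - by rewrite path_adjE // up' mem_nth ?index_uniq /= -/i; lia.
left; exists (behead (rev p)); right; apply: head_nth0; rewrite ?size_rev; try lia.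
by rewrite nth_rev -?iend ?subSS ?subn0 //; lia.
Qed.

End PathAdjacency.

Section PathCovers.
Variables (T : finType) (e : rel T).
Hypothesis e_sym : symmetric e.
Implicit Types (A : {set T}) (p q : seq T) (ps : seq (seq T)).

Definition linear_forest_on A ps : Prop :=
  [/\ uniq (flatten ps), flatten ps =i A &
      {in A &, forall x y, e x y = has (fun p => path_adj p x y) ps}].

Lemma linear_forest_on_setT ps : linear_forest_on [set: T] ps -> linear_forest e.
Proof.
by case=> ups cover edges; exists ps; split=> // [x | x y]; rewrite ?cover ?edges ?inE.
Qed.

Lemma linear_forest_on_perm A ps ps' :
  perm_eq ps ps' -> linear_forest_on A ps -> linear_forest_on A ps'.
Proof.
move=> pp [ups cover edges]; have pf := perm_flatten pp.
split=> [|x|x y xA yA]; first by rewrite -(perm_uniq pf).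
  by rewrite -(perm_mem pf).
by rewrite edges // (perm_has _ pp).
Qed.

Lemma linear_forest_on_rev A p ps :
  linear_forest_on A (p :: ps) -> linear_forest_on A (rev p :: ps).
Proof.
move=> [ups cover edges]; have up : uniq p by move: ups; rewrite cat_uniq => /andP[].
have pf : perm_eq (flatten (rev p :: ps)) (flatten (p :: ps)) by rewrite /= perm_cat2r perm_rev.
split=> [|x|x y xA yA]; first by rewrite (perm_uniq pf).
  by rewrite (perm_mem pf).
by rewrite edges //= path_adj_rev.
Qed.

Lemma linear_forest_on_add A v q ps : v \in A ->
  {in A, forall y, e v y = (ohead q == Some y)} ->
  linear_forest_on (A :\ v) (q :: ps) -> linear_forest_on A ((v :: q) :: ps).
Proof.
move=> vA nbv [ups cover edges].
have vq : v \notin flatten (q :: ps) by rewrite cover !inE eqxx.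
have nadj y : has (fun p => path_adj p v y) (q :: ps) = false.
  apply/hasP => -[p pqs /path_adj_mem vp]; case/negP: vq.
  by apply/flattenP; exists p.
have nadj' y : has (fun p => path_adj p y v) (q :: ps) = false.
  by rewrite -(nadj y); apply: eq_has => p; apply: path_adj_sym.
split=> [|x|x y xA yA]; first by rewrite /= vq.
  by rewrite /= in_cons cover !inE; case: eqP => // ->.
have -> : has (fun p => path_adj p x y) ((v :: q) :: ps) =
    [|| has (fun p => path_adj p x y) (q :: ps),
        (x == v) && (ohead q == Some y) | (y == v) && (ohead q == Some x)].
  rewrite /= path_adj_cons.
  by case: (path_adj q x y); case: (has _ ps); rewrite /= ?orbT ?orbF.
case: (x =P v) => [-> | /eqP xv].
  by rewrite nadj nbv //=; case: (y =P v) => [-> | _]; rewrite ?orbb ?orbF.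
case: (y =P v) => [-> | /eqP yv]; first by rewrite nadj' e_sym nbv.
by rewrite orbF edges // !inE ?xv ?yv.
Qed.

End PathCovers.

Section Build.
Variables (T : finType) (e : rel T).
Hypotheses (e_sym : symmetric e) (e_irr : irreflexive e) (e_deg : max_degree2 e).
Hypothesis e_leaf : forall A : {set T}, A != set0 ->
  exists2 v, v \in A & {in A &, forall x y, e v x -> e v y -> x = y}.

Lemma linear_forest_on_attach (A : {set T}) v u ps : v \in A -> u \in A :\ v ->
  {in A, forall y, e v y = (u == y)} -> linear_forest_on e (A :\ v) ps ->
  exists ps', linear_forest_on e A ps'.
Proof.
move=> vA uA' nbv cover.
have /flattenP[p pps up] : u \in flatten ps by case: cover => _ -> _.
have {}cover := linear_forest_on_perm (perm_to_rem pps) cover.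
have [uniq_p p_A' p_e] : [/\ uniq p, {subset p <= A :\ v} &
    {in A :\ v &, forall x y, path_adj p x y -> e x y}].
  case: cover => /=; rewrite cat_uniq => /andP[-> _] cm edges.
  by split=> // [x xp | x y xA yA a]; rewrite ?edges //= ?a // -cm mem_cat xp.
have nbq q : ohead q = Some u -> {in A, forall y, e v y = (ohead q == Some y)}.
  by move=> -> y yA; rewrite nbv.
case: (path_end_or_inner uniq_p up) => [[r [pE | pE]] | [y1 [y2 [y12 a1 a2]]]].
- exists ((v :: p) :: rem p ps).
  by apply: (linear_forest_on_add e_sym) => //; apply: nbq; rewrite pE.
- exists ((v :: rev p) :: rem p ps); apply: (linear_forest_on_add e_sym) => //.
    by apply: nbq; rewrite pE.
  exact: linear_forest_on_rev.
have y1A' : y1 \in A :\ v by apply: p_A'; apply: (@path_adj_mem _ p _ u); rewrite path_adj_sym.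
have y2A' : y2 \in A :\ v by apply: p_A'; apply: (@path_adj_mem _ p _ u); rewrite path_adj_sym.
have euv : e u v by rewrite e_sym nbv ?eqxx //; case/setD1P: uA'.
exfalso; apply: (e_deg _ _ y12 euv (p_e _ _ uA' y1A' a1) (p_e _ _ uA' y2A' a2)).
  by apply: contraTneq y1A' => <-; rewrite !inE ?eqxx.
by apply: contraTneq y2A' => <-; rewrite !inE ?eqxx.
Qed.

Lemma linear_forest_on_exists (A : {set T}) : exists ps, linear_forest_on e A ps.
Proof.
elim: {A}_.+1 {-2}A (ltnSn #|A|) => // n IH A; rewrite ltnS => An.
have [-> | /e_leaf[v vA v_leaf]] := eqVneq A set0.
  by exists [::]; split=> // x; rewrite inE.
have [ps cover] : exists ps, linear_forest_on e (A :\ v) ps.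
  by apply: IH; rewrite (cardsD1 v A) vA in An.
have [u /andP[uA evu] | isolated] := pickP [pred u | (u \in A) && e v u].
  apply: (linear_forest_on_attach (u := u) vA _ _ cover) => [|y yA].
    by rewrite !inE uA andbT; apply: contraTneq evu => ->; rewrite e_irr.
  by apply/idP/eqP => [evy | <-] //; apply: v_leaf.
exists ([:: v] :: ps); apply: (linear_forest_on_add e_sym) => // y yA.
by move: (isolated y); rewrite /= yA /= => ->.
Qed.

End Build.

Definition zigzag_pos (n k : nat) : nat := if odd k then n.-1 - k./2 else k./2.

Lemma zigzag_pos_consecutive n o m : m.+3 < n ->
  let z k := o + zigzag_pos n k in
  cyclically_sorted [:: z m.+1; z m; z m.+2] != cyclically_sorted [:: z m.+1; z m.+3; z m.+2]
  /\ cyclically_sorted [:: z m.+2; z m.+3; z m.+1] != cyclically_sorted [:: z m.+2; z m; z m.+1].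
Proof.
move=> mn z; rewrite /z /zigzag_pos /= !uphalf_half negbK.
case: (odd m) (odd_double_half m) => /= Hm; split; cyclic_lia.
Qed.

Lemma zigzag_pos_lt n k : k < n -> zigzag_pos n k < n.
Proof. by rewrite /zigzag_pos; case: (odd k) (odd_double_half k) => /=; lia. Qed.

Lemma zigzag_posS n k : k < n -> zigzag_pos n.+1 k.+1 = n - zigzag_pos n k.
Proof. by rewrite /zigzag_pos /= uphalf_half; case: (odd k) (odd_double_half k) => /=; lia. Qed.

(* The vertices x_0, ..., x_{n-1} of a path are laid out as
   x_0, x_2, x_4, ..., x_5, x_3, x_1: vertex x_k lands at position
   [zigzag_pos n k], and the path edges become pairwise parallel chords. *)
Fixpoint zigzag (T : Type) (p : seq T) : seq T :=
  if p is x :: p' then x :: rev (zigzag p') else [::].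

Lemma size_zigzag (T : Type) (p : seq T) : size (zigzag p) = size p.
Proof. by elim: p => //= x p IHp; rewrite size_rev IHp. Qed.

Lemma perm_zigzag (T : eqType) (p : seq T) : perm_eq (zigzag p) p.
Proof. by elim: p => //= x p IHp; rewrite perm_cons perm_rev. Qed.

Lemma perm_flatten_zigzag (T : eqType) (ps : seq (seq T)) :
  perm_eq (flatten [seq zigzag p | p <- ps]) (flatten ps).
Proof. by elim: ps => //= p ps IHps; rewrite perm_cat ?perm_zigzag. Qed.

Lemma nth_zigzag (T : Type) (x0 : T) p k : k < size p ->
  nth x0 (zigzag p) (zigzag_pos (size p) k) = nth x0 p k.
Proof.
elim: p k => [|x p IHp] [|k] //=; rewrite ltnS => kp.
have zp := zigzag_pos_lt kp; rewrite zigzag_posS //.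
case E: (size p - zigzag_pos (size p) k) => [|m] /=; first lia.
rewrite nth_rev size_zigzag; last lia.
by rewrite (_ : size p - m.+1 = zigzag_pos (size p) k) ?IHp //; lia.
Qed.

Lemma index_zigzag (T : eqType) (p : seq T) x : uniq p -> x \in p ->
  index x (zigzag p) = zigzag_pos (size p) (index x p).
Proof.
move=> up xp; have ip : index x p < size p by rewrite index_mem.
rewrite -{1}(nth_index x xp) -(nth_zigzag x ip) index_uniq ?(perm_uniq (perm_zigzag p)) //.
by rewrite size_zigzag zigzag_pos_lt.
Qed.

Lemma find_flatten_uniq (T : eqType) (ps : seq (seq T)) j x :
  uniq (flatten ps) -> j < size ps -> x \in nth [::] ps j ->
  find (fun p => x \in p) ps = j.
Proof.
elim: ps j => [|q ps IHps] [|j] //= ups; rewrite ?ltnS => jps xj; first by rewrite xj.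
move: ups; rewrite cat_uniq => /and3P[_ qps ups].
have -> : (x \in q) = false.
  apply: contraNF qps => xq; apply/hasP; exists x => //.
  by apply/flattenP; exists (nth [::] ps j); rewrite ?mem_nth.
by rewrite (IHps j).
Qed.

Lemma index_flatten_zigzag (T : eqType) (ps : seq (seq T)) x :
  uniq (flatten ps) -> x \in flatten ps ->
  let j := find (fun p => x \in p) ps in
  index x (flatten [seq zigzag p | p <- ps]) =
  sumn [seq size p | p <- take j ps] + zigzag_pos (size (nth [::] ps j)) (index x (nth [::] ps j)).
Proof.
elim: ps => [|q ps IHps] //=; rewrite cat_uniq mem_cat => /and3P[uq _ ups].
rewrite index_cat (perm_mem (perm_zigzag q)); case: ifP => [xq _ | _ xps] /=.
  by rewrite index_zigzag.
by rewrite IHps // size_zigzag addnA.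
Qed.

Section ZigzagOrdering.
Variables (T : finType) (e : rel T) (ps : seq (seq T)).
Hypotheses (ps_uniq : uniq (flatten ps)) (ps_cover : forall x, x \in flatten ps).
Hypothesis ps_edge : forall x y, e x y = has (fun p => path_adj p x y) ps.

Definition path_num (x : T) : nat := find (fun p => x \in p) ps.
Local Notation path x := (nth [::] ps (path_num x)).
Definition rank (x : T) : nat := index x (path x).

Lemma path_num_lt x : path_num x < size ps.
Proof. by rewrite -has_find; have /flattenP[p pps xp] := ps_cover x; apply/hasP; exists p. Qed.

Lemma mem_path x : x \in path x.
Proof. by have /(nth_find [::]) : has (fun p => x \in p) ps by rewrite has_find path_num_lt. Qed.

Lemma uniq_path x : uniq (path x).
Proof.
have /perm_to_rem/perm_flatten/perm_uniq := mem_nth [::] (path_num_lt x).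
by rewrite ps_uniq /= cat_uniq => /esym/and3P[].
Qed.

Lemma rank_lt x : rank x < size (path x).
Proof. by rewrite index_mem mem_path. Qed.

Lemma edge_rank x y :
  e x y = (path_num x == path_num y) && ((rank y == (rank x).+1) || (rank x == (rank y).+1)).
Proof.
rewrite ps_edge; apply/hasP/andP => [[p pps] | [/eqP pxy adj]].
  have up : uniq p by move: (perm_uniq (perm_flatten (perm_to_rem pps)));
    rewrite ps_uniq /= cat_uniq => /esym/and3P[].
  rewrite path_adjE // => /and3P[xp yp adj].
  have pE z : z \in p -> path_num z = index p ps.
    by move=> zp; apply: find_flatten_uniq; rewrite ?index_mem ?nth_index.
  by rewrite /rank !pE // eqxx nth_index.
exists (path x); first by rewrite mem_nth ?path_num_lt.
have yp : y \in path x by rewrite pxy mem_path.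
by move: adj; rewrite path_adjE ?uniq_path // mem_path yp /rank -pxy.
Qed.

Lemma rank_neq x y : x != y -> path_num x = path_num y -> rank x != rank y.
Proof.
move=> xy pxy; apply: contra xy => /eqP; rewrite /rank -pxy => rxy; apply/eqP.
by rewrite -[LHS](nth_index x (mem_path x)) -[RHS](nth_index x (mem_path y)) -pxy rxy.
Qed.

Lemma linear_forest_triangle_free : triangle_free e.
Proof. by move=> a b c; rewrite !edge_rank; lia. Qed.

Lemma linear_forest_square_free : square_free e.
Proof.
move=> a b c d ac bd; rewrite !edge_rank => /andP[/eqP pab rab] /andP[/eqP pbc rbc].
move=> /andP[/eqP pcd rcd] /andP[_ rda].
by move: (rank_neq ac (etrans pab pbc)) (rank_neq bd (etrans pbc pcd)); lia.
Qed.

Lemma linear_forest_max_degree2 : max_degree2 e.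
Proof.
move=> x y1 y2 y3 y12 y13 y23; rewrite !edge_rank.
move=> /andP[/eqP p1 r1] /andP[/eqP p2 r2] /andP[/eqP p3 r3].
move: (rank_neq y12 (etrans (esym p1) p2)) (rank_neq y13 (etrans (esym p1) p3)).
by move: (rank_neq y23 (etrans (esym p2) p3)); lia.
Qed.

Lemma zigzag_circular : circular_ordering (flatten [seq zigzag p | p <- ps]).
Proof.
have pz := perm_flatten_zigzag ps.
by split=> [|x]; rewrite ?(perm_uniq pz) ?(perm_mem pz).
Qed.

Lemma index_zigzag_ordering x :
  index x (flatten [seq zigzag p | p <- ps]) =
  sumn [seq size p | p <- take (path_num x) ps] + zigzag_pos (size (path x)) (rank x).
Proof. exact: index_flatten_zigzag. Qed.

Lemma zigzag_P4_separated : P4_separated e (flatten [seq zigzag p | p <- ps]).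
Proof.
move=> a b c d ac bd; rewrite !edge_rank => /andP[/eqP pab rab] /andP[/eqP pbc rbc].
move=> /andP[/eqP pcd rcd].
have rac := rank_neq ac (etrans pab pbc); have rbd := rank_neq bd (etrans pbc pcd).
rewrite !index_zigzag_ordering -pcd -pbc -pab.
have := rank_lt a; have := rank_lt b; have := rank_lt c; have := rank_lt d.
rewrite -pcd -pbc -pab; set n := size _; set o := sumn _.
have [m [[-> [-> [-> ->]]] | [-> [-> [-> ->]]]]] : exists m,
    (rank a = m /\ rank b = m.+1 /\ rank c = m.+2 /\ rank d = m.+3) \/
    (rank a = m.+3 /\ rank b = m.+2 /\ rank c = m.+1 /\ rank d = m).
- by case/orP: rab => /eqP rab; [exists (rank a); left | exists (rank d); right]; lia.
- by move=> *; have [] := @zigzag_pos_consecutive n o m (ltac:(lia)).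
- by move=> *; have [] := @zigzag_pos_consecutive n o m (ltac:(lia)).
Qed.

End ZigzagOrdering.

Theorem proposition5 (T : finType) (e : rel T)
  (e_sym : symmetric e) (e_irr : irreflexive e) :
  linear_forest e <-> exists s : seq T, circular_ordering s /\ LF_free e s.
Proof.
split=> [[ps [ups cover edges]] | [s [s_circ /(LF_freeP e_sym e_irr s_circ) [_ _ deg sep]]]].
  have zz_circ := zigzag_circular ups cover.
  exists (flatten [seq zigzag p | p <- ps]); split=> //; apply/(LF_freeP e_sym e_irr zz_circ).
  split; [ exact: linear_forest_triangle_free ups cover edges
         | exact: linear_forest_square_free ups cover edges
         | exact: linear_forest_max_degree2 ups cover edges
         | exact: zigzag_P4_separated ups cover edges ].
have [ps cover] := linear_forest_on_exists e_sym e_irr deg (exists_leaf e_sym sep) [set: T].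
exact: linear_forest_on_setT cover.
Qed.
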